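(* For any instance of the data described in the context, $\hat{\mathcal A}_M\supseteq\hat{\mathcal A}^*_{SOCP}$, where $\hat{\cdot}$ denotes projection onto the coordinates $(p^g,q^g)$.
   Context: Data: finite bus set $\mathcal B$, line set $\mathcal L$ (unordered pairs of distinct buses; variables $c_{ij},s_{ij}$ indexed by ordered pairs with $\{i,j\}\in\mathcal L$), $\delta(i)$ the neighbors of $i$, generator set $\mathcal G\subseteq\mathcal B$, reals $G_{ij},B_{ij}$ (lines), $G_{ii},B_{ii}$ (buses), demands $p_i^d,q_i^d$, voltage bounds $0\le\underline V_i\le\overline V_i$, generator bounds $p_i^{\min}\le p_i^{\max}$, $q_i^{\min}\le q_i^{\max}$ ($i\in\mathcal G$). Variables $p_i^g,q_i^g$ for $i\in\mathcal G$, with $p_i^g=q_i^g=0$ for $i\notin\mathcal G$. (ALT): $p_i^g-p_i^d=G_{ii}c_{ii}+\sum_{j\in\delta(i)}(G_{ij}c_{ij}-B_{ij}s_{ij})$, $q_i^g-q_i^d=-B_{ii}c_{ii}+\sum_{j\in\delta(i)}(-B_{ij}c_{ij}-G_{ij}s_{ij})$, $\underline V_i^2\le c_{ii}\le\overline V_i^2$ ($i\in\mathcal B$); $c_{ij}=c_{ji}$, $s_{ij}=-s_{ji}$ (lines); $p_i^{\min}\le p_i^g\le p_i^{\max}$, $q_i^{\min}\le q_i^g\le q_i^{\max}$ ($i\in\mathcal G$). McCormick envelope: for $x\in[\underline x,\overline x]$, $y\in[\underline y,\overline y]$, $M(w=xy)$ denotes $\max\{\underline yx+\underline xy-\underline x\underline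 y,\ \overline yx+\overline xy-\overline x\overline y\}\le w\le\min\{\underline yx+\overline xy-\overline x\underline y,\ \overline yx+\underline xy-\underline x\overline y\}$. $\mathcal A_M$: set of $(p^g,q^g,c,s,C,S,D)$ satisfying (ALT) and, for each line, $C_{ij}+S_{ij}=D_{ij}$, $-\overline V_i\overline V_j\le c_{ij},s_{ij}\le\overline V_i\overline V_j$, $M(C_{ij}=c_{ij}^2)$ and $M(S_{ij}=s_{ij}^2)$ with bounds $[-\overline V_i\overline V_j,\overline V_i\overline V_j]$, $M(D_{ij}=c_{ii}c_{jj})$ with bounds $[\underline V_i^2,\overline V_i^2]$, $[\underline V_j^2,\overline V_j^2]$, and $C_{ij},S_{ij}\ge0$. $\mathcal A^*_{SOCP}$: set of $(p^g,q^g,c,s)$ satisfying (ALT) and $c_{ij}^2+s_{ij}^2\le c_{ii}c_{jj}$ for each line. *)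

From HB Require Import structures.
From mathcomp Require Import all_boot all_order all_algebra.
Set Implicit Arguments. Unset Strict Implicit. Unset Printing Implicit Defensive.
Import Order.TTheory GRing.Theory Num.Theory.
Local Open Scope ring_scope.

(* Lines: the symmetric irreflexive
   relation [line] (an unordered pair {i,j} is a line iff line i j).
   Line quantities G_ij, B_ij are functions T -> T -> R, symmetric on lines;
   bus quantities G_ii, B_ii are the diagonal values. *)
Record opf_data (R : realFieldType) (T : finType) := OpfData {
  line : rel T;
  gen  : {set T};
  Gc : T -> T -> R;
  Bc : T -> T -> R;
  pd : T -> R;
  qd : T -> R;
  Vlo : T -> R;
  Vhi : T -> R;
  pmin : T -> R;
  pmax : T -> R;
  qmin : T -> R;
  qmax : T -> R
}.

Definition valid_data (R : realFieldType) (T : finType) (d : opf_data R T) : Prop :=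
  [/\ (forall i j, line d i j = line d j i),
      (forall i, ~~ line d i i),
      (forall i j, line d i j -> Gc d i j = Gc d j i /\ Bc d i j = Bc d j i),
      (forall i, 0 <= Vlo d i <= Vhi d i) &
      (forall i, i \in gen d -> pmin d i <= pmax d i /\ qmin d i <= qmax d i)].

Definition ALT (R : realFieldType) (T : finType) (d : opf_data R T)
    (pg qg : T -> R) (c s : T -> T -> R) : Prop :=
  [/\ (forall i, pg i - pd d i =
          Gc d i i * c i i
          + \sum_(j | line d i j) (Gc d i j * c i j - Bc d i j * s i j)),
      (forall i, qg i - qd d i =
          - Bc d i i * c i i
          + \sum_(j | line d i j) (- Bc d i j * c i j - Gc d i j * s i j)),
      (forall i, Vlo d i ^+ 2 <= c i i <= Vhi d i ^+ 2),
      (forall i j, line d i j -> c i j = c j i /\ s i j = - s j i) &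
      (forall i, if i \in gen d then
                   (pmin d i <= pg i <= pmax d i) /\ (qmin d i <= qg i <= qmax d i)
                 else pg i = 0 /\ qg i = 0)].

Definition McCormick (R : realFieldType) (xl xu yl yu x y w : R) : Prop :=
  Num.max (yl * x + xl * y - xl * yl) (yu * x + xu * y - xu * yu) <= w /\
  w <= Num.min (yl * x + xu * y - xu * yl) (yu * x + xl * y - xl * yu).

Definition A_M (R : realFieldType) (T : finType) (d : opf_data R T)
    (pg qg : T -> R) (c s C S D : T -> T -> R) : Prop :=
  ALT d pg qg c s /\
  forall i j, line d i j ->
    let b := Vhi d i * Vhi d j in
    [/\ C i j + S i j = D i j,
        (- b <= c i j <= b) /\ (- b <= s i j <= b),
        McCormick (- b) b (- b) b (c i j) (c i j) (C i j) /\
        McCormick (- b) b (- b) b (s i j) (s i j) (S i j),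
        McCormick (Vlo d i ^+ 2) (Vhi d i ^+ 2) (Vlo d j ^+ 2) (Vhi d j ^+ 2)
                  (c i i) (c j j) (D i j) &
        (0 <= C i j /\ 0 <= S i j)].

Definition A_SOCP (R : realFieldType) (T : finType) (d : opf_data R T)
    (pg qg : T -> R) (c s : T -> T -> R) : Prop :=
  ALT d pg qg c s /\
  forall i j, line d i j -> c i j ^+ 2 + s i j ^+ 2 <= c i i * c j j.

Definition A_M_hat (R : realFieldType) (T : finType) (d : opf_data R T)
    (pg qg : T -> R) : Prop :=
  exists c s C S D, A_M d pg qg c s C S D.

Definition A_SOCP_hat (R : realFieldType) (T : finType) (d : opf_data R T)
    (pg qg : T -> R) : Prop :=
  exists c s, A_SOCP d pg qg c s.

From mathcomp Require Import all_boot all_order all_algebra.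
From mathcomp Require Import ring lra.
Import Order.TTheory GRing.Theory Num.Theory.
Local Open Scope ring_scope.

(* Given an SOCP point, lift each line with S := s^2, D := c_ii c_jj and
   C := D - s^2.  The cone constraint gives c^2 <= C, the voltage bounds give
   D <= (V_i V_j)^2, and on [-b, b] the McCormick envelope of x * x is exactly
   the band between the tangent lines 2b|x| - b^2 <= x^2 and the chord b^2;
   the envelope of c_ii * c_jj contains the true product. *)

Lemma McCormick_mul (R : realFieldType) (xl xu yl yu x y : R) :
  xl <= x <= xu -> yl <= y <= yu -> McCormick xl xu yl yu x y (x * y).
Proof.
move=> /andP[? ?] /andP[? ?]; rewrite /McCormick ge_max le_min.
by repeat (apply/andP; split); nra.
Qed.

Lemma McCormick_sqr (R : realFieldType) (b x w : R) :
  0 <= b -> x ^+ 2 <= w -> w <= b ^+ 2 -> McCormick (- b) b (- b) b x x w.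
Proof.
rewrite /McCormick ge_max le_min !expr2 => ? ? ?.
by repeat (apply/andP; split); nra.
Qed.

Lemma sqr_le_bound (R : realFieldType) (b x : R) :
  0 <= b -> x ^+ 2 <= b ^+ 2 -> - b <= x <= b.
Proof. by rewrite !expr2 => ? ?; apply/andP; split; nra. Qed.

Lemma McCormick_lift_line (R : realFieldType) (li hi lj hj cii cjj x y : R) :
  0 <= li <= hi -> 0 <= lj <= hj ->
  li ^+ 2 <= cii <= hi ^+ 2 -> lj ^+ 2 <= cjj <= hj ^+ 2 ->
  x ^+ 2 + y ^+ 2 <= cii * cjj ->
  let b := hi * hj in
  let D := cii * cjj in
  let C := D - y ^+ 2 in
  [/\ C + y ^+ 2 = D,
      (- b <= x <= b) /\ (- b <= y <= b),
      McCormick (- b) b (- b) b x x C /\ McCormick (- b) b (- b) b y y (y ^+ 2),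
      McCormick (li ^+ 2) (hi ^+ 2) (lj ^+ 2) (hj ^+ 2) cii cjj D &
      (0 <= C /\ 0 <= y ^+ 2)].
Proof.
move=> /andP[li0 lihi] /andP[lj0 ljhj] /andP[lci hci] /andP[lcj hcj] hcone b D C.
have b0 : 0 <= b by apply: mulr_ge0; lra.
have cii0 : 0 <= cii by apply: le_trans lci; apply: sqr_ge0.
have cjj0 : 0 <= cjj by apply: le_trans lcj; apply: sqr_ge0.
have Db : D <= b ^+ 2 by rewrite exprMn ler_pM.
have x2 := sqr_ge0 x; have y2 := sqr_ge0 y.
have xC : x ^+ 2 <= C by rewrite /C lerBrDr.
have Cb : C <= b ^+ 2 by apply: le_trans Db; rewrite /C gerBl.
have yb : y ^+ 2 <= b ^+ 2 by apply: le_trans Db; rewrite /D; lra.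
split.
- by rewrite /C subrK.
- by split; apply: sqr_le_bound => //; apply: le_trans Cb.
- by split; apply: McCormick_sqr.
- by apply: McCormick_mul; apply/andP.
- by split=> //; apply: le_trans xC.
Qed.

Theorem proposition2 (R : realFieldType) (T : finType) (d : opf_data R T) :
  valid_data d ->
  forall pg qg : T -> R, A_SOCP_hat d pg qg -> A_M_hat d pg qg.
Proof.
move=> [_ _ _ hV _] pg qg [c [s [hALT hcone]]].
have [_ _ hc _ _] := hALT.
exists c, s, (fun i j => c i i * c j j - s i j ^+ 2), (fun i j => s i j ^+ 2),
  (fun i j => c i i * c j j).
split=> // i j hij.
exact: McCormick_lift_line (hV i) (hV j) (hc i) (hc j) (hcone i j hij).
Qed.
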